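(* Let $\mathcal{C}$ be a small category and let $\beta<\gamma$ be cardinals with $\gamma$ regular, such that every hom-set $\mathcal{C}(B,C)$ has cardinality less than $\beta$ and $\mathcal{C}$ has fewer than $\gamma$ objects. Then every $\gamma$-flat functor $M\colon\mathcal{C}^{op}\to\mathbf{Set}$ is Cauchy.
   Context: A functor $M\colon \mathcal{C}^{op}\to\mathbf{Set}$ is $\gamma$-flat if its left Kan extension $\mathrm{Lan}_Y M\colon[\mathcal{C},\mathbf{Set}]\to\mathbf{Set}$ along the Yoneda embedding $Y\colon\mathcal{C}^{op}\to[\mathcal{C},\mathbf{Set}]$ preserves all $\gamma$-small limits (limits of diagrams indexed by categories with fewer than $\gamma$ morphisms); it is Cauchy if $\mathrm{Lan}_Y M$ preserves all small limits. *)

From Stdlib Require Import Relations.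


Record Cat := {
  Ob : Type;
  Hom : Ob -> Ob -> Type;
  idm : forall a, Hom a a;
  comp : forall a b c, Hom b c -> Hom a b -> Hom a c;
  comp_id_l : forall a b (f : Hom a b), comp a b b (idm b) f = f;
  comp_id_r : forall a b (f : Hom a b), comp a a b f (idm a) = f;
  comp_assoc : forall a b c d (f : Hom a b) (g : Hom b c) (h : Hom c d),
      comp a c d h (comp a b c g f) = comp a b d (comp b c d h g) f
}.
Arguments Hom : clear implicits.
Arguments idm {_} _.
Arguments comp {_} {_ _ _} _ _.

Definition Mor (C : Cat) : Type := {a : Ob C & {b : Ob C & Hom C a b}}.

Record Presheaf (C : Cat) := {
  P0 : Ob C -> Type;
  Pact : forall a b, Hom C a b -> P0 b -> P0 a;
  Pact_id : forall a (x : P0 a), Pact a a (idm a) x = x;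
  Pact_comp : forall a b c (f : Hom C a b) (g : Hom C b c) (x : P0 c),
      Pact a c (comp g f) x = Pact a b f (Pact b c g x)
}.
Arguments P0 {C} M a : rename.
Arguments Pact {C} M {a b} f x : rename.

(** * Diagrams  D : I -> [C, Set]  (functors from a small category I into
    the functor category [C,Set]) *)
Record Diagram (I C : Cat) := {
  D0 : Ob I -> Ob C -> Type;
  Dact : forall i a b, Hom C a b -> D0 i a -> D0 i b;
  Dact_id : forall i a (x : D0 i a), Dact i a a (idm a) x = x;
  Dact_comp : forall i a b c (f : Hom C a b) (g : Hom C b c) (x : D0 i a),
      Dact i a c (comp g f) x = Dact i b c g (Dact i a b f x);
  Dmap : forall i j, Hom I i j -> forall a, D0 i a -> D0 j a;
  Dmap_nat : forall i j (u : Hom I i j) a b (f : Hom C a b) (x : D0 i a),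
      Dmap i j u b (Dact i a b f x) = Dact j a b f (Dmap i j u a x);
  Dmap_id : forall i a (x : D0 i a), Dmap i i (idm i) a x = x;
  Dmap_comp : forall i j k (u : Hom I i j) (v : Hom I j k) a (x : D0 i a),
      Dmap i k (comp v u) a x = Dmap j k v a (Dmap i j u a x)
}.
Arguments D0 {I C} D i a : rename.
Arguments Dact {I C} D i {a b} f x : rename.
Arguments Dmap {I C} D {i j} u a x : rename.

Definition quot (S : Type) (R : S -> S -> Prop) : Type :=
  {P : S -> Prop | exists x, forall y, P y <-> R x y}.
Definition cls (S : Type) (R : S -> S -> Prop) (x : S) : quot S R :=
  exist _ (R x) (ex_intro _ x (fun y => iff_refl (R x y))).

(** * The tensor product  M (x)_C F = coend^c M(c) x F(c),
    for M : C^op -> Set and a (raw) functor F : C -> Set given by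
    F0 and its action Fact.  This is the value Lan_Y M (F) of the left
    Kan extension of M along the Yoneda embedding C^op -> [C,Set]. *)
Section Tensor.
Variables (C : Cat) (M : Presheaf C) (F0 : Ob C -> Type)
          (Fact : forall a b, Hom C a b -> F0 a -> F0 b).

Definition TRep : Type := {c : Ob C & (P0 M c * F0 c)%type}.

Inductive tstep : TRep -> TRep -> Prop :=
  | tstep_intro : forall c d (f : Hom C c d) (m : P0 M d) (x : F0 c),
      tstep (existT _ c (Pact M f m, x)) (existT _ d (m, Fact c d f x)).

Definition teq : TRep -> TRep -> Prop := clos_refl_sym_trans TRep tstep.

Definition Tensor : Type := quot TRep teq.
End Tensor.
Arguments TRep {C} M F0.
Arguments tstep {C} M {F0} Fact _ _.
Arguments teq {C} M {F0} Fact _ _.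
Arguments Tensor {C} M {F0} Fact.
Arguments cls {S} R x.

Definition tmap (C : Cat) (M : Presheaf C) (F0 G0 : Ob C -> Type)
  (eta : forall a, F0 a -> G0 a) (p : TRep M F0) : TRep M G0 :=
  existT _ (projT1 p) (fst (projT2 p), eta (projT1 p) (snd (projT2 p))).
Arguments tmap {C} M {F0 G0} eta p.

Section Limit.
Variables (I C : Cat) (D : Diagram I C).

Definition L0 (a : Ob C) : Type :=
  {x : forall i, D0 D i a | forall i j (u : Hom I i j), Dmap D u a (x i) = x j}.

Lemma Lact_ok a b (f : Hom C a b) (x : L0 a) :
  forall i j (u : Hom I i j),
    Dmap D u b (Dact D i f (proj1_sig x i)) = Dact D j f (proj1_sig x j).
Proof.
  intros i j u. rewrite Dmap_nat. destruct x as [x hx]. simpl. now rewrite hx.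
Qed.

Definition Lact a b (f : Hom C a b) (x : L0 a) : L0 b :=
  exist _ (fun i => Dact D i f (proj1_sig x i)) (Lact_ok a b f x).
End Limit.
Arguments L0 {I C} D a.
Arguments Lact {I C} D {a b} f x.

Definition DF (I C : Cat) (D : Diagram I C) (i : Ob I) :
  forall a b, Hom C a b -> D0 D i a -> D0 D i b :=
  fun a b f x => Dact D i f x.
Arguments DF {I C} D i _ _ _ _.
Definition LF (I C : Cat) (D : Diagram I C) :
  forall a b, Hom C a b -> L0 D a -> L0 D b :=
  fun a b f x => Lact D f x.
Arguments LF {I C} D _ _ _ _.

(** * Lan_Y M preserves the limit of D: the canonical comparison map
      M (x) (lim D)  -->  lim_i ( M (x) D i )
    is a bijection.  The target is the limit in Set of the diagram
    i |-> M (x) D i, i.e. compatible families of classes. *)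
Section Preserve.
Variables (I C : Cat) (M : Presheaf C) (D : Diagram I C).

Definition LimTensor : Type :=
  {y : forall i, Tensor M (DF D i) |
    forall i j (u : Hom I i j),
      exists r : TRep M (D0 D i),
        cls (teq M (DF D i)) r = y i /\
        cls (teq M (DF D j)) (tmap M (fun a => Dmap D u a) r) = y j}.

Definition compar (p : TRep M (L0 D)) :
  forall i, Tensor M (DF D i) :=
  fun i => cls (teq M (DF D i))
               (existT _ (projT1 p) (fst (projT2 p), proj1_sig (snd (projT2 p)) i)).

Definition LanY_preserves_limit : Prop :=
  (forall y : LimTensor, exists p, forall i, compar p i = proj1_sig y i) /\
  (forall p q, (forall i, compar p i = compar q i) ->
               teq M (LF D) p q).
End Preserve.
Arguments LimTensor {I C} M D.
Arguments compar {I C} M D p i.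
Arguments LanY_preserves_limit {I C} M D.

Definition card_le (X Y : Type) : Prop := exists f : X -> Y, forall x y, f x = f y -> x = y.
Definition card_lt (X Y : Type) : Prop := card_le X Y /\ ~ card_le Y X.

Definition regular_card (K : Type) : Prop :=
  card_le nat K /\
  forall (J : Type) (A : J -> Type),
    card_lt J K -> (forall j, card_lt (A j) K) -> card_lt {j : J & A j} K.

Definition gamma_flat (K : Type) (C : Cat) (M : Presheaf C) : Prop :=
  forall (I : Cat), card_lt (Mor I) K ->
    forall D : Diagram I C, LanY_preserves_limit M D.

Definition cauchy (C : Cat) (M : Presheaf C) : Prop :=
  forall (I : Cat) (D : Diagram I C), LanY_preserves_limit M D.
Arguments gamma_flat K {C} M.
Arguments cauchy {C} M.

From Stdlib Require Import Relations Classical ProofIrrelevance IndefiniteDescription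
  FunctionalExtensionality PropExtensionality.
From Corelib Require Import ssreflect ssrbool.
From mathcomp Require boolp classical_sets.

(* Flatness makes the category of elements of M gamma-filtered: every family of
   elements of M indexed by a diagram in C with fewer than gamma arrows is the
   restriction of a single element n of some M(d) along a cocone to d.  Applied to
   beta elements of one M(c) this gives beta distinct arrows c -> d, which is
   impossible; so by comparability each M(c) has at most beta elements, and by
   regularity the category of elements of M has fewer than gamma arrows.  Applied
   to that category itself it yields n in M(d) and a natural s : M => C(-, d) with
   n.s(m) = m, i.e. M is a retract of a representable.  Then (c, m, x) |-> F(s m)(x)
   embeds M (x) F into F(d), naturally in F, and every class contains some
   (d, n, y); this makes Lan_Y M a retract of evaluation at d, so it preserves all
   limits. *)

Set Implicit Arguments.

Lemma card_le_trans (X Y Z : Type) : card_le X Y -> card_le Y Z -> card_le X Z.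
Proof. by move=> [f f_inj] [g g_inj]; exists (fun x => g (f x)) => x y /g_inj /f_inj. Qed.

Lemma card_le_lt_trans (X Y Z : Type) : card_le X Y -> card_lt Y Z -> card_lt X Z.
Proof.
move=> XY [YZ ZY]; split; first exact: card_le_trans XY YZ.
by move=> ZX; apply: ZY; exact: card_le_trans ZX XY.
Qed.

Lemma card_lt_trans (X Y Z : Type) : card_lt X Y -> card_lt Y Z -> card_lt X Z.
Proof. by move=> [XY _]; exact: card_le_lt_trans. Qed.

Lemma proj1_sig_inj (A : Type) (P : A -> Prop) (u v : sig P) :
  proj1_sig u = proj1_sig v -> u = v.
Proof. by apply: eq_sig_hprop => *; exact: proof_irrelevance. Qed.

Lemma card_le_sig (A : Type) (P : A -> Prop) : card_le (sig P) A.
Proof. by exists (@proj1_sig _ _); exact: proj1_sig_inj. Qed.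

Section PartialInjections.
Variables A B : Type.

Definition partial_inj (g : A -> B -> Prop) : Prop :=
  (forall a b b', g a b -> g a b' -> b = b') /\ (forall a a' b, g a b -> g a' b -> a = a').

Definition PInj : Type := {g | partial_inj g}.

Definition pinj_le (s t : PInj) : bool :=
  boolp.asbool (forall a b, proj1_sig s a b -> proj1_sig t a b).

Lemma partial_inj_chain_union (Ch : classical_sets.set PInj) :
  classical_sets.total_on Ch pinj_le ->
  partial_inj (fun a b => exists t, Ch t /\ proj1_sig t a b).
Proof.
move=> Ch_total.
have common a b a' b' : (exists t, Ch t /\ proj1_sig t a b) ->
    (exists t, Ch t /\ proj1_sig t a' b') ->
    exists t : PInj, proj1_sig t a b /\ proj1_sig t a' b'.
  move=> [s [Ch_s sab]] [t [Ch_t ta'b']].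
  by case: (Ch_total s t Ch_s Ch_t) => /boolp.asboolP le; [exists t | exists s]; split; auto.
split.
- move=> a b b' gab gab'; have [[t [t_fun _]] /= [tab tab']] := common _ _ _ _ gab gab'.
  exact: t_fun tab tab'.
- move=> a a' b gab ga'b; have [[t [_ t_inj]] /= [tab ta'b]] := common _ _ _ _ gab ga'b.
  exact: t_inj tab ta'b.
Qed.

Lemma partial_inj_extend g a0 b0 : partial_inj g ->
  ~ (exists b, g a0 b) -> ~ (exists a, g a b0) ->
  partial_inj (fun a b => g a b \/ (a = a0 /\ b = b0)).
Proof.
move=> [g_fun g_inj] a0_free b0_free; split.
- move=> a b b' [gab|[-> ->]] [gab'|[Ea ->]]; subst => //.
  + exact: g_fun gab gab'.
  + by case: a0_free; exists b.
  + by case: a0_free; exists b'.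
- move=> a a' b [gab|[-> ->]] [ga'b|[-> Eb]]; subst => //.
  + exact: g_inj gab ga'b.
  + by case: b0_free; exists a.
  + by case: b0_free; exists a'.
Qed.

Lemma card_le_of_partial_inj g : partial_inj g -> (forall a, exists b, g a b) -> card_le A B.
Proof.
move=> [_ g_inj] g_total.
exists (fun a => proj1_sig (constructive_indefinite_description _ (g_total a))) => a a'.
case: constructive_indefinite_description => b gab.
case: constructive_indefinite_description => b' ga'b' /= Ebb'.
by apply: g_inj gab _; rewrite Ebb'.
Qed.

End PartialInjections.

Lemma partial_inj_flip (A B : Type) (g : A -> B -> Prop) :
  partial_inj g -> partial_inj (fun b a => g a b).
Proof.
by case=> g_fun g_inj; split=> b b' a gab gab'; [exact: g_inj gab gab' | exact: g_fun gab gab'].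
Qed.

(* A maximal partial injection is total on one side, or it could be extended by a
   pair of unmatched points. *)
Lemma card_le_total (A B : Type) : card_le A B \/ card_le B A.
Proof.
have empty_inj : partial_inj (fun (_ : A) (_ : B) => False) by split=> ? ? ? [].
have [[g g_inj] g_max] :
    exists t : PInj A B, classical_sets.premaximal (fun s t => pinj_le s t) t.
  apply: (classical_sets.ZL_preorder (exist _ _ empty_inj)).
  - by move=> t; apply/boolp.asboolP.
  - by move=> r s t /boolp.asboolP rs /boolp.asboolP st; apply/boolp.asboolP => a b /rs /st.
  - move=> Ch Ch_total; exists (exist _ _ (partial_inj_chain_union Ch_total)).
    by move=> t Ch_t; apply/boolp.asboolP => a b tab; exists t.
case: (classic (forall a, exists b, g a b)) => [g_total|].
  by left; exact: card_le_of_partial_inj g_inj g_total.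
case: (classic (forall b, exists a, g a b)) => [g_onto|].
  by right; exact: card_le_of_partial_inj (partial_inj_flip g_inj) g_onto.
move=> /not_all_ex_not [b0 b0_free] /not_all_ex_not [a0 a0_free].
have g'_inj := partial_inj_extend a0 b0 g_inj a0_free b0_free.
have g_le_g' : pinj_le (exist _ g g_inj) (exist _ _ g'_inj).
  by apply/boolp.asboolP => a b gab; left.
have /boolp.asboolP /= g'_le_g := g_max _ g_le_g'.
by case: a0_free; exists b0; apply: g'_le_g; right.
Qed.

Lemma cls_eqE (S : Type) (R : S -> S -> Prop) (x y : S) :
  equivalence S R -> cls R x = cls R y <-> R x y.
Proof.
case=> R_refl R_trans R_sym; split=> [Exy | Rxy].
- by have /= -> := f_equal (@proj1_sig _ _) Exy; exact: R_refl.
- apply: proj1_sig_inj; apply: functional_extensionality => z.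
  apply: propositional_extensionality.
  by split=> ?; [apply: R_trans (R_sym _ _ Rxy) _ | apply: R_trans Rxy _].
Qed.

Lemma cls_teqE (C : Cat) (M : Presheaf C) (F0 : Ob C -> Type)
    (Fact : forall a b, Hom C a b -> F0 a -> F0 b) (p q : TRep M F0) :
  cls (teq M Fact) p = cls (teq M Fact) q <-> teq M Fact p q.
Proof. apply: cls_eqE; exact: clos_rst_is_equiv. Qed.

Definition quot_rep (S : Type) (R : S -> S -> Prop) (q : quot S R) : S :=
  proj1_sig (constructive_indefinite_description _ (proj2_sig q)).

Lemma quot_repK (S : Type) (R : S -> S -> Prop) (q : quot S R) : cls R (quot_rep q) = q.
Proof.
rewrite /quot_rep; case: constructive_indefinite_description => x qx.
apply: proj1_sig_inj; apply: functional_extensionality => y.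
by apply: propositional_extensionality; split=> /qx.
Qed.

Section CoYoneda.
Variables (C : Cat) (M : Presheaf C) (c : Ob C).

Definition rep_act a b (f : Hom C a b) (g : Hom C c a) : Hom C c b := comp f g.

Definition rep_eval (p : TRep M (Hom C c)) : P0 M c :=
  Pact M (snd (projT2 p)) (fst (projT2 p)).

Lemma rep_eval_teq p q : teq M rep_act p q -> rep_eval p = rep_eval q.
Proof.
elim=> [_ _ [a b f m g] | // | _ _ _ -> // | _ _ _ _ -> _ -> //].
by rewrite /rep_eval /rep_act /= Pact_comp.
Qed.

Lemma teq_rep_eval p : teq M rep_act p (existT _ c (rep_eval p, idm c)).
Proof.
case: p => [e [m g]]; rewrite /rep_eval /= -{1}(comp_id_r _ _ _ g).
exact/rst_sym/rst_step/tstep_intro.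
Qed.

Lemma teq_repE p q : teq M rep_act p q <-> rep_eval p = rep_eval q.
Proof.
split=> [|E]; first exact: rep_eval_teq.
apply: rst_trans (teq_rep_eval p) _; rewrite E; exact/rst_sym/teq_rep_eval.
Qed.
End CoYoneda.

Section RepresentableDiagram.
Variables (I C : Cat) (cO : Ob I -> Ob C).
Variable cH : forall i j, Hom I i j -> Hom C (cO j) (cO i).
Arguments cH {i j}.
Hypotheses (cH_id : forall i, cH (idm i) = idm (cO i))
  (cH_comp : forall i j k (u : Hom I i j) (v : Hom I j k), cH (comp v u) = comp (cH u) (cH v)).

Definition RepDiagram : Diagram I C.
refine {| D0 i a := Hom C (cO i) a; Dact i a b f x := comp f x;
          Dmap i j u a x := comp x (cH u) |}.
- by move=> i a x; rewrite comp_id_l.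
- by move=> i a b c f g x; rewrite comp_assoc.
- by move=> i j u a b f x; rewrite comp_assoc.
- by move=> i a x; rewrite cH_id comp_id_r.
- by move=> i j k u v a x; rewrite cH_comp comp_assoc.
Defined.

Lemma flat_cocone (K : Type) (M : Presheaf C) : gamma_flat K M -> card_lt (Mor I) K ->
  forall m : forall i, P0 M (cO i), (forall i j (u : Hom I i j), Pact M (cH u) (m i) = m j) ->
  exists d (n : P0 M d) (x : forall i, Hom C (cO i) d),
    (forall i j (u : Hom I i j), comp (x i) (cH u) = x j) /\ forall i, Pact M (x i) n = m i.
Proof.
move=> M_flat I_small m m_compat.
have [lim_onto _] := M_flat I I_small RepDiagram.
pose y i := cls (teq M (DF RepDiagram i)) (existT _ (cO i) (m i, idm (cO i))).
have y_compat : forall i j (u : Hom I i j), exists r : TRep M (D0 RepDiagram i),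
    cls (teq M (DF RepDiagram i)) r = y i /\
    cls (teq M (DF RepDiagram j)) (tmap M (fun a => Dmap RepDiagram u a) r) = y j.
  move=> i j u; exists (existT _ (cO i) (m i, idm (cO i))); split=> //.
  apply/cls_teqE/teq_repE; rewrite /rep_eval /= comp_id_l Pact_id; exact: m_compat.
have [[d [n [x x_cocone]]] x_lifts] := lim_onto (exist _ y y_compat).
exists d, n, x; split=> [// | i].
have /cls_teqE/teq_repE := x_lifts i; rewrite /rep_eval /= => ->; exact: Pact_id.
Qed.

End RepresentableDiagram.

Definition DiscreteCat (J : Type) : Cat.
refine {| Ob := J; Hom i j := i = j; idm i := eq_refl; comp i j k v u := eq_trans u v |}.
- by [].
- by move=> i j u; exact: eq_trans_refl_l.
- by move=> i j k l u v w; rewrite eq_trans_assoc.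
Defined.

Lemma card_le_Mor_discrete (J : Type) : card_le (Mor (DiscreteCat J)) J.
Proof.
exists (@projT1 _ _) => [[i [j u]] [i' [j' u']]] /= Ei.
by destruct u, u', Ei.
Qed.

Section Flat.
Variables (K : Type) (C : Cat) (M : Presheaf C).
Hypothesis M_flat : gamma_flat K M.

Lemma flat_cover (J : Type) (c : J -> Ob C) (m : forall j, P0 M (c j)) : card_lt J K ->
  exists d (n : P0 M d) (g : forall j, Hom C (c j) d), forall j, Pact M (g j) n = m j.
Proof.
move=> J_small.
pose cH i j (u : Hom (DiscreteCat J) i j) : Hom C (c j) (c i) :=
  match u in _ = j return Hom C (c j) (c i) with eq_refl => idm (c i) end.
have [//|i j k u v||i j u|d [n [g [_ g_lifts]]]] :=
  @flat_cocone (DiscreteCat J) C c cH _ _ K M M_flat _ m.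
- by destruct u, v; rewrite /= comp_id_l.
- exact: card_le_lt_trans (card_le_Mor_discrete J) J_small.
- by destruct u; exact: Pact_id.
by exists d, n, g.
Qed.

Lemma flat_card_le_hom (J : Type) (c : Ob C) :
  card_lt J K -> card_le J (P0 M c) -> exists d, card_le J (Hom C c d).
Proof.
move=> J_small [f f_inj].
have [d [n [g g_lifts]]] := flat_cover (fun _ => c) f J_small.
by exists d, g => j j' Eg; apply: f_inj; rewrite -g_lifts -(g_lifts j') Eg.
Qed.

Lemma flat_presheaf_card_lt (Kbeta : Type) (c : Ob C) :
  card_lt Kbeta K -> (forall d, card_lt (Hom C c d) Kbeta) -> card_lt (P0 M c) K.
Proof.
move=> beta_lt_K hom_small.
case: (card_le_total (P0 M c) Kbeta) => [Mc_le_beta | beta_le_Mc].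
  exact: card_le_lt_trans Mc_le_beta beta_lt_K.
have [d beta_le_hom] := flat_card_le_hom c beta_lt_K beta_le_Mc.
by case: (hom_small d).
Qed.
End Flat.

Section Elements.
Variables (C : Cat) (M : Presheaf C).

Definition ElemHom (i j : {c : Ob C & P0 M c}) : Type :=
  {f : Hom C (projT1 j) (projT1 i) | Pact M f (projT2 i) = projT2 j}.

Lemma elem_comp_subproof i j k (v : ElemHom j k) (u : ElemHom i j) :
  Pact M (comp (proj1_sig u) (proj1_sig v)) (projT2 i) = projT2 k.
Proof. by case: u v => [f Ef] [g Eg]; rewrite /= Pact_comp Ef Eg. Qed.

Definition ElemCatOp : Cat.
refine {| Ob := {c : Ob C & P0 M c}; Hom := ElemHom;
          idm i := exist _ (idm (projT1 i)) (Pact_id _ M _ _);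
          comp i j k v u := exist _ _ (elem_comp_subproof v u) |}.
- by move=> i j u; apply: proj1_sig_inj; exact: comp_id_r.
- by move=> i j u; apply: proj1_sig_inj; exact: comp_id_l.
- by move=> i j k l u v w; apply: proj1_sig_inj; rewrite /= comp_assoc.
Defined.
End Elements.

Lemma card_lt_Mor_elem (K : Type) (C : Cat) (M : Presheaf C) :
  regular_card K -> card_lt (Ob C) K -> (forall c, card_lt (P0 M c) K) ->
  (forall a b, card_lt (Hom C a b) K) -> card_lt (Mor (ElemCatOp M)) K.
Proof.
move=> [_ K_regular] ob_small M_small hom_small.
have elem_small : card_lt (Ob (ElemCatOp M)) K := K_regular _ _ ob_small M_small.
apply: (K_regular _ _ elem_small) => i; apply: (K_regular _ _ elem_small) => j.
exact: card_le_lt_trans (card_le_sig _) (hom_small _ _).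
Qed.

Lemma flat_natural_section (K : Type) (C : Cat) (M : Presheaf C) :
  gamma_flat K M -> card_lt (Mor (ElemCatOp M)) K ->
  exists d (n : P0 M d) (s : forall c, P0 M c -> Hom C c d),
    (forall c m, Pact M (s c m) n = m) /\
    (forall a b (f : Hom C a b) m, s a (Pact M f m) = comp (s b m) f).
Proof.
move=> M_flat elem_small.
have [//|//|d [n [x [x_cocone x_lifts]]]] :=
  @flat_cocone (ElemCatOp M) C (@projT1 _ _) (fun i j u => proj1_sig u) _ _ K M M_flat
    elem_small (@projT2 _ _) (fun i j u => proj2_sig u).
exists d, n, (fun c m => x (existT _ c m)); split=> [c m | a b f m].
  exact: (x_lifts (existT _ c m)).
by rewrite -(x_cocone (existT _ b m) (existT _ a (Pact M f m)) (exist _ f eq_refl)).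
Qed.

Section RetractOfRepresentable.
Variables (C : Cat) (M : Presheaf C) (d : Ob C) (n : P0 M d).
Variable s : forall c, P0 M c -> Hom C c d.
Hypotheses (s_sec : forall c m, Pact M (s c m) n = m)
  (s_nat : forall a b (f : Hom C a b) (m : P0 M b), s a (Pact M f m) = comp (s b m) f).

Definition tensor_eval (F0 : Ob C -> Type) (Fact : forall a b, Hom C a b -> F0 a -> F0 b)
    (p : TRep M F0) : F0 d :=
  Fact _ d (s _ (fst (projT2 p))) (snd (projT2 p)).

Lemma tensor_eval_teq (F0 : Ob C -> Type) (Fact : forall a b, Hom C a b -> F0 a -> F0 b) :
  (forall a b c (f : Hom C a b) (g : Hom C b c) x,
     Fact a c (comp g f) x = Fact b c g (Fact a b f x)) ->
  forall p q, teq M Fact p q -> tensor_eval Fact p = tensor_eval Fact q.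
Proof.
move=> Fact_comp p q; elim=> [_ _ [a b f m x] | // | _ _ _ -> // | _ _ _ _ -> _ -> //].
by rewrite /tensor_eval /= s_nat Fact_comp.
Qed.

Lemma teq_tensor_eval (F0 : Ob C -> Type) (Fact : forall a b, Hom C a b -> F0 a -> F0 b)
    (p : TRep M F0) :
  teq M Fact p (existT _ d (n, tensor_eval Fact p)).
Proof.
case: p => c [m x]; rewrite /tensor_eval /= -{1}(s_sec _ m).
exact/rst_step/tstep_intro.
Qed.

Lemma tensor_eval_cls (I : Cat) (D : Diagram I C) (i : Ob I) (p q : TRep M (D0 D i)) :
  cls (teq M (DF D i)) p = cls (teq M (DF D i)) q ->
  tensor_eval (DF D i) p = tensor_eval (DF D i) q.
Proof. by move/cls_teqE; apply: tensor_eval_teq => *; exact: Dact_comp. Qed.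

Theorem representable_retract_cauchy : cauchy M.
Proof.
move=> I D; split.
- move=> [y y_compat].
  pose v i := tensor_eval (DF D i) (quot_rep (y i)).
  have v_compat i j (u : Hom I i j) : Dmap D u d (v i) = v j.
    have [r [r_i r_j]] := y_compat i j u.
    have -> : v i = tensor_eval (DF D i) r.
      by apply: tensor_eval_cls; rewrite quot_repK r_i.
    have -> : v j = tensor_eval (DF D j) (tmap M (Dmap D u) r).
      by apply: tensor_eval_cls; rewrite quot_repK r_j.
    by case: r {r_i r_j} => c [m x]; rewrite /tensor_eval /= Dmap_nat.
  exists (existT _ d (n, exist _ v v_compat)) => i.
  rewrite /= -[y i]quot_repK /compar /=; apply/cls_teqE/rst_sym; exact: teq_tensor_eval.
- move=> p q same_compar.
  apply: rst_trans (teq_tensor_eval (LF D) p) _.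
  apply: rst_trans (rst_sym _ _ _ _ (teq_tensor_eval (LF D) q)).
  have -> : tensor_eval (LF D) p = tensor_eval (LF D) q.
    apply: proj1_sig_inj; apply: functional_extensionality_dep => i.
    exact: tensor_eval_cls (same_compar i).
  exact: rst_refl.
Qed.
End RetractOfRepresentable.

Theorem corollary2p8 (C : Cat) (Kbeta Kgamma : Type) :
  card_lt Kbeta Kgamma ->
  regular_card Kgamma ->
  (forall B C' : Ob C, card_lt (Hom C B C') Kbeta) ->
  card_lt (Ob C) Kgamma ->
  forall M : Presheaf C, gamma_flat Kgamma M -> cauchy M.
Proof.
move=> beta_lt_gamma gamma_regular hom_small ob_small M M_flat.
have hom_lt_gamma a b : card_lt (Hom C a b) Kgamma :=
  card_lt_trans (hom_small a b) beta_lt_gamma.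
have M_small c : card_lt (P0 M c) Kgamma :=
  flat_presheaf_card_lt M_flat c beta_lt_gamma (hom_small c).
have [d [n [s [s_sec s_nat]]]] := flat_natural_section M_flat
  (card_lt_Mor_elem M gamma_regular ob_small M_small hom_lt_gamma).
exact: representable_retract_cauchy s_sec s_nat.
Qed.
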